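(* Let $I$ be a non-degenerate interval and $f:I\to\mathbb{R}$ continuous with a monotone graph. Then for every $x\in I$ the approximate upper right Dini derivative of $f$ at $x$ equals the upper right Dini derivative $\limsup_{y\to x+}\frac{f(y)-f(x)}{y-x}$; and likewise each of the other three approximate Dini derivatives equals the corresponding Dini derivative at every point.
   Context: The graph $\{(x,f(x)):x\in I\}\subseteq\mathbb{R}^2$ carries the Euclidean metric; a metric space is monotone if there are a linear order $<$ and $c>0$ with $d(x,y)\le c\,d(x,z)$ whenever $x<y<z$. The approximate upper right Dini derivative is $\overline{f}^+_{ap}(x)=\inf\{t:\lim_{\delta\to0+}\delta^{-1}\lambda(\{y\in(x,x+\delta):\frac{f(y)-f(x)}{y-x}\le t\})=1\}$ ($\lambda$ Lebesgue measure); the other three approximate Dini derivatives are defined analogously. *)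

From HB Require Import structures.
From mathcomp Require Import all_boot all_order all_algebra.
From mathcomp Require Import all_classical all_reals all_analysis.
Set Implicit Arguments. Unset Strict Implicit. Unset Printing Implicit Defensive.
Import Order.TTheory GRing.Theory Num.Theory.
Import numFieldNormedType.Exports.
Local Open Scope classical_set_scope.
Local Open Scope ring_scope.

Section Defs.
Variable R : realType.

Definition nondegenerate_p41 (I : interval R) : Prop :=
  exists a b : R, a \in I /\ b \in I /\ a < b.

Definition graph_p41 (I : interval R) (f : R -> R) : set (R * R) :=
  [set p | p.1 \in I /\ p.2 = f p.1].

Definition dist2_p41 (p q : R * R) : R :=
  Num.sqrt ((p.1 - q.1) ^+ 2 + (p.2 - q.2) ^+ 2).

Definition strict_linear_order {T} (S : set T) (lt : T -> T -> Prop) : Prop :=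
  (forall x, S x -> ~ lt x x) /\
  (forall x y z, S x -> S y -> S z -> lt x y -> lt y z -> lt x z) /\
  (forall x y, S x -> S y -> x <> y -> lt x y \/ lt y x).

Definition monotone_metric (S : set (R * R)) : Prop :=
  exists (lt : R * R -> R * R -> Prop) (c : R),
    strict_linear_order S lt /\ 0 < c /\
    forall x y z, S x -> S y -> S z -> lt x y -> lt y z ->
      dist2_p41 x y <= c * dist2_p41 x z.

Definition dquot (f : R -> R) (x y : R) : R := (f y - f x) / (y - x).

(* Dini derivatives (values of f outside I are ignored) *)
Definition dini_upper_right (I : interval R) (f : R -> R) (x : R) : \bar R :=
  ereal_inf [set ereal_sup [set (dquot f x y)%:E | y in [set y | y \in I /\ x < y < x + d]]
            | d in [set d : R | 0 < d]].
Definition dini_lower_right (I : interval R) (f : R -> R) (x : R) : \bar R :=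
  ereal_sup [set ereal_inf [set (dquot f x y)%:E | y in [set y | y \in I /\ x < y < x + d]]
            | d in [set d : R | 0 < d]].
Definition dini_upper_left (I : interval R) (f : R -> R) (x : R) : \bar R :=
  ereal_inf [set ereal_sup [set (dquot f x y)%:E | y in [set y | y \in I /\ x - d < y < x]]
            | d in [set d : R | 0 < d]].
Definition dini_lower_left (I : interval R) (f : R -> R) (x : R) : \bar R :=
  ereal_sup [set ereal_inf [set (dquot f x y)%:E | y in [set y | y \in I /\ x - d < y < x]]
            | d in [set d : R | 0 < d]].

Definition right_density_one (A : set R) (x : R) : Prop :=
  (fun d : R => (lebesgue_measure (A `&` `]x, (x + d)%R[) * (d^-1)%:E)%E) @ 0^'+ --> 1%E.
Definition left_density_one (A : set R) (x : R) : Prop :=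
  (fun d : R => (lebesgue_measure (A `&` `](x - d)%R, x[) * (d^-1)%:E)%E) @ 0^'+ --> 1%E.

Definition ap_upper_right (I : interval R) (f : R -> R) (x : R) : \bar R :=
  ereal_inf [set t%:E | t in [set t : R |
    right_density_one [set y | y \in I /\ dquot f x y <= t] x]].
Definition ap_lower_right (I : interval R) (f : R -> R) (x : R) : \bar R :=
  ereal_sup [set t%:E | t in [set t : R |
    right_density_one [set y | y \in I /\ t <= dquot f x y] x]].
Definition ap_upper_left (I : interval R) (f : R -> R) (x : R) : \bar R :=
  ereal_inf [set t%:E | t in [set t : R |
    left_density_one [set y | y \in I /\ dquot f x y <= t] x]].
Definition ap_lower_left (I : interval R) (f : R -> R) (x : R) : \bar R :=
  ereal_sup [set t%:E | t in [set t : R |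
    left_density_one [set y | y \in I /\ t <= dquot f x y] x]].

End Defs.

From HB Require Import structures.
From mathcomp Require Import all_boot all_order all_algebra.
From mathcomp Require Import all_classical all_reals all_analysis.
From mathcomp Require Import ring lra.
Set Implicit Arguments. Unset Strict Implicit. Unset Printing Implicit Defensive.
Import Order.TTheory GRing.Theory Num.Theory.
Import numFieldNormedType.Exports.
Local Open Scope classical_set_scope.
Local Open Scope ring_scope.

(* A monotone metric on the graph orders its points compatibly with betweenness of
   abscissae: by continuity, a sub-arc cannot pass from one side of a point of the graph
   to the other without coming arbitrarily close to it.  Hence f has no spikes: for
   a < y < b, f y lies within c (|b - a| + |f b - f a|) of f a or of f b.
   An approximate Dini derivative never exceeds the corresponding Dini derivative, since
   a bound holding on a one-sided neighbourhood holds on a set of density one.  Conversely,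
   let {(f z - f x) / (z - x) <= s} have density one at x while some y near x has a
   difference quotient above t > s.  Two crossings z1 < y < z2 of the line of slope s
   through (x, f x), close to y, would make (y, f y) a spike; so on one side of y the graph
   stays above that line on an interval of length proportional to |y - x|, which the set
   misses, contradicting density one.  The lower derivatives follow by applying this to -f. *)

Section ApproximateDini.
Variable R : realType.
Implicit Types (I : interval R) (f : R -> R).

Lemma within_continuous_dist_lt (A : set R) f z e :
  {within A, continuous f} -> A z -> 0 < e ->
  exists2 d, 0 < d & forall t, A t -> `|t - z| < d -> `|f t - f z| < e.
Proof.
move=> f_cont Az e_gt0.
have : f @ within A (nbhs z) --> f z.
  by have := f_cont z; rewrite /continuous_at {1}/nbhs /= nbhs_subspace_in.
move=> /cvgrPdist_lt /(_ e e_gt0); rewrite near_withinE => /nbhs_ballP [d d_gt0 f_near].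
exists d => // t At tz; rewrite distrC; apply: f_near => //.
by rewrite /ball /= distrC.
Qed.

Lemma mem_interval_between I a b y : a \in I -> b \in I -> a <= y <= b -> y \in I.
Proof. by move=> aI bI; apply: (@interval_is_interval _ I a b). Qed.

Lemma dist2_ge_fst (p q : R * R) : `|p.1 - q.1| <= dist2_p41 p q.
Proof.
rewrite -sqrtr_sqr ler_sqrt; last by rewrite addr_ge0 // sqr_ge0.
by rewrite lerDl sqr_ge0.
Qed.

Lemma dist2_ge_snd (p q : R * R) : `|p.2 - q.2| <= dist2_p41 p q.
Proof.
rewrite -sqrtr_sqr ler_sqrt; last by rewrite addr_ge0 // sqr_ge0.
by rewrite lerDr sqr_ge0.
Qed.

Lemma dist2_le_sum (p q : R * R) : dist2_p41 p q <= `|p.1 - q.1| + `|p.2 - q.2|.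
Proof.
rewrite -[X in _ <= X]ger0_norm ?addr_ge0 // -sqrtr_sqr ler_sqrt; last exact: sqr_ge0.
rewrite -[(p.1 - q.1) ^+ 2]real_normK ?num_real // -[(p.2 - q.2) ^+ 2]real_normK ?num_real //.
have := normr_ge0 (p.1 - q.1); have := normr_ge0 (p.2 - q.2); nra.
Qed.

Lemma crossing_pair f (P : R -> Prop) l r e :
  l <= r -> {within `[l, r], continuous f} -> 0 < e -> P l -> ~ P r ->
  exists a b, [/\ a \in `[l, r], b \in `[l, r], P a, ~ P b
                & `|a - b| + `|f a - f b| < e].
Proof.
move=> lr f_cont e_gt0 Pl nPr.
pose E := [set t | t \in `[l, r] /\ P t].
have El : E l by split=> //; rewrite in_itv /= lexx lr.
have E_le_r : ubound E r by move=> t [] /[!in_itv] /= /andP[].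
have hsE : has_sup E by split; [exists l | exists r].
set s := sup E.
have sin : s \in `[l, r].
  by rewrite in_itv /= (sup_upper_bound hsE El) sup_le_ub //; exists l.
have e4 : 0 < e / 4 by lra.
have [d d_gt0 f_near] := within_continuous_dist_lt f_cont sin e4.
pose d' := Num.min d (e / 4).
have d'0 : 0 < d' by rewrite lt_min d_gt0 e4.
have [d'd d'e] : d' <= d /\ d' <= e / 4 by rewrite !ge_min !lexx orbT.
have [a [ain Pa]] := sup_adherent d'0 hsE; rewrite -/s => sa.
have a_le_s : a <= s := sup_upper_bound hsE (conj ain Pa).
have [b [bin nPb bs]] : exists b, [/\ b \in `[l, r], ~ P b & `|b - s| < d'].
  have [sr|] := ltP s r; last first.
    move=> rs; have -> : s = r.
      by apply/le_anti; rewrite rs andbT; move: sin; rewrite in_itv /= => /andP[_ ->].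
    by exists r; rewrite subrr normr0 in_itv /= lexx lr.
  pose b := Num.min r (s + d' / 2).
  have sb : s < b by rewrite lt_min sr /=; lra.
  have [br bs] : b <= r /\ b <= s + d' / 2 by rewrite !ge_min !lexx orbT.
  have bin : b \in `[l, r] by rewrite in_itv /= br (le_trans (sup_upper_bound hsE El) (ltW sb)).
  exists b; split => //; last by rewrite ger0_norm ?subr_ge0 ?(ltW sb) //; lra.
  by move=> Pb; have := sup_upper_bound hsE (conj bin Pb); rewrite leNgt sb.
have as' : `|a - s| < d' by rewrite distrC ger0_norm ?subr_ge0 //; lra.
have fas := f_near a ain (lt_le_trans as' d'd).
have fbs := f_near b bin (lt_le_trans bs d'd).
exists a, b; split => //.
have := ler_distD s a b; have := ler_distD (f s) (f a) (f b).
rewrite (distrC s b) (distrC (f s) (f b)) => ? ?; lra.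
Qed.

Definition spike_bound I f (c : R) : Prop :=
  forall a y b, a \in I -> b \in I -> a < y < b ->
    `|f y - f a| <= c * (`|b - a| + `|f b - f a|) \/
    `|f y - f b| <= c * (`|b - a| + `|f b - f a|).

Section MonotoneGraph.
Variables (I : interval R) (f : R -> R) (lt : R * R -> R * R -> Prop) (c : R).
Hypotheses (f_cont : {within [set y | y \in I], continuous f})
  (lt_order : strict_linear_order (graph_p41 I f) lt) (c_gt0 : 0 < c)
  (lt_dist : forall p q r, graph_p41 I f p -> graph_p41 I f q -> graph_p41 I f r ->
     lt p q -> lt q r -> dist2_p41 p q <= c * dist2_p41 p r).

Let on_graph {t : R} : t \in I -> graph_p41 I f (t, f t). Proof. by []. Qed.

Lemma graph_order_side l r w : l \in I -> r \in I -> w \in I -> l <= r ->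
  w < l \/ r < w -> lt (l, f l) (w, f w) <-> lt (r, f r) (w, f w).
Proof.
move=> lI rI wI lr w_out; case: lt_order => irr [_ tot].
have lrI : `[l, r] `<=` [set y | y \in I].
  by move=> t; rewrite /= in_itv /=; exact: mem_interval_between.
have [eta eta_gt0 eta_le] : exists2 eta, 0 < eta & forall a, a \in `[l, r] -> eta <= `|a - w|.
  case: w_out => [wl|rw]; [exists (l - w) | exists (w - r)]; rewrite ?subr_gt0 // => a;
    rewrite in_itv /= => /andP[la ar]; [rewrite ger0_norm | rewrite ler0_norm]; lra.
pose P t := lt (t, f t) (w, f w).
have far : forall a b, a \in `[l, r] -> b \in `[l, r] -> P a -> ~ P b ->
    eta <= c * (`|a - b| + `|f a - f b|).
  move=> a b al bl Pa nPb.
  have wb : lt (w, f w) (b, f b).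
    have bw : (b, f b) <> (w, f w).
      by case=> bw; move: bl; rewrite bw in_itv /=; case: w_out; lra.
    by case: (tot _ _ (on_graph (lrI b bl)) (on_graph wI) bw).
  have := lt_dist (on_graph (lrI a al)) (on_graph wI) (on_graph (lrI b bl)) Pa wb.
  have := ler_wpM2l (ltW c_gt0) (dist2_le_sum (a, f a) (b, f b)).
  have := dist2_ge_fst (a, f a) (w, f w); have := eta_le a al; rewrite /=; lra.
have no_cross (Q : R -> Prop) :
    (forall a b, a \in `[l, r] -> b \in `[l, r] -> Q a -> ~ Q b ->
      eta <= c * (`|a - b| + `|f a - f b|)) -> Q l -> Q r.
  move=> Qfar Ql; apply: contrapT => nQr.
  have [a [b [al bl Qa nQb ab]]] :=
    crossing_pair lr (continuous_subspaceW lrI f_cont) (divr_gt0 eta_gt0 c_gt0) Ql nQr.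
  have := Qfar a b al bl Qa nQb; rewrite ltr_pdivlMr // mulrC in ab; lra.
split; first exact: (no_cross P far).
move=> Pr; apply: contrapT => nPl.
suff : ~ P r by [].
apply: (no_cross (fun t => ~ P t)) => // a b al bl nPa /contrapT Pb.
by rewrite distrC (distrC (f a)); apply: far.
Qed.

Lemma graph_order_between a y b : a \in I -> b \in I -> a < y < b ->
  lt (a, f a) (y, f y) /\ lt (y, f y) (b, f b) \/
  lt (b, f b) (y, f y) /\ lt (y, f y) (a, f a).
Proof.
move=> aI bI /andP[ay yb]; case: lt_order => irr [trans tot].
have yI : y \in I by apply: mem_interval_between aI bI _; rewrite !ltW.
have ab_yb := graph_order_side aI yI bI (ltW ay) (or_intror yb).
have ya_ba := graph_order_side yI bI aI (ltW yb) (or_introl ay).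
have neq u v : u < v -> (u, f u) <> (v, f v) by move=> uv [e _]; rewrite e ltxx in uv.
have [ab|ba] := tot _ _ (on_graph aI) (on_graph bI) (neq _ _ (lt_trans ay yb)).
- left; split; last exact/ab_yb.
  have [//|ya] := tot _ _ (on_graph aI) (on_graph yI) (neq _ _ ay).
  case: (irr _ (on_graph aI)).
  exact: trans _ _ _ (on_graph aI) (on_graph bI) (on_graph aI) ab (ya_ba.1 ya).
- right; split; last exact/ya_ba.
  have [//|yb'] := tot _ _ (on_graph bI) (on_graph yI) (fun e => neq _ _ yb (esym e)).
  case: (irr _ (on_graph bI)).
  exact: trans _ _ _ (on_graph bI) (on_graph aI) (on_graph bI) ba (ab_yb.2 yb').
Qed.

Lemma spike_bound_of_graph_order : spike_bound I f c.
Proof.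
move=> a y b aI bI ayb; have yI : y \in I.
  by case/andP: ayb => ay yb; apply: mem_interval_between aI bI _; rewrite !ltW.
have dAB := ler_wpM2l (ltW c_gt0) (dist2_le_sum (a, f a) (b, f b)).
have dBA := ler_wpM2l (ltW c_gt0) (dist2_le_sum (b, f b) (a, f a)).
rewrite /= (distrC a) (distrC (f a)) in dAB; rewrite /= in dBA.
have [[Ay Yb]|[By Ya]] := graph_order_between aI bI ayb.
- left; have := lt_dist (on_graph aI) (on_graph yI) (on_graph bI) Ay Yb.
  have := dist2_ge_snd (a, f a) (y, f y); rewrite /= (distrC (f a)); lra.
- right; have := lt_dist (on_graph bI) (on_graph yI) (on_graph aI) By Ya.
  have := dist2_ge_snd (b, f b) (y, f y); rewrite /= (distrC (f b)); lra.
Qed.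

End MonotoneGraph.

Lemma spike_bound_of_monotone_graph I f :
  {within [set y | y \in I], continuous f} -> monotone_metric (graph_p41 I f) ->
  exists2 c, 0 < c & spike_bound I f c.
Proof.
move=> f_cont [lt [c [lt_order [c_gt0 lt_dist]]]]; exists c => //.
exact: spike_bound_of_graph_order lt_order c_gt0 lt_dist.
Qed.

Lemma within_continuousN (A : set R) f :
  {within A, continuous f} -> {within A, continuous (fun z => - f z)}.
Proof. by move=> f_cont z; apply: cvgN; exact: f_cont. Qed.

Lemma spike_boundN I f c : spike_bound I f c -> spike_bound I (fun z => - f z) c.
Proof. by move=> spike a y b aI bI ayb; rewrite -!opprD !normrN; apply: spike. Qed.

Lemma spike_affine_deviation I f c s b z1 y z2 : spike_bound I f c ->
  z1 \in I -> z2 \in I -> z1 < y < z2 ->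
  f z1 = b + s * z1 -> f z2 = b + s * z2 ->
  `|f y - (b + s * y)| <= (c * (1 + `|s|) + `|s|) * (z2 - z1).
Proof.
move=> spike z1I z2I yz fz1 fz2; case/andP: (yz) => z1y yz2.
have z12 : 0 <= z2 - z1 by lra.
have dev_at z : z1 <= z <= z2 -> f z = b + s * z ->
    `|f y - f z| <= c * (1 + `|s|) * (z2 - z1) ->
    `|f y - (b + s * y)| <= (c * (1 + `|s|) + `|s|) * (z2 - z1).
  move=> /andP[z1z zz2] fz yz_le.
  have : `|f z - (b + s * y)| <= `|s| * (z2 - z1).
    rewrite fz (_ : b + s * z - (b + s * y) = s * (z - y)); last by ring.
    rewrite normrM ler_wpM2l // ler_norml; apply/andP; split; lra.
  have := ler_distD (f z) (f y) (b + s * y); lra.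
have spike_dist : `|z2 - z1| + `|f z2 - f z1| = (1 + `|s|) * (z2 - z1).
  rewrite fz2 fz1 (_ : b + s * z2 - (b + s * z1) = s * (z2 - z1)); last by ring.
  by rewrite normrM (ger0_norm z12); ring.
case: (spike _ _ _ z1I z2I yz); rewrite spike_dist mulrA => h.
- by apply: (dev_at z1) => //; apply/andP; split; lra.
- by apply: (dev_at z2) => //; apply/andP; split; lra.
Qed.

Lemma ivt_zero I (g : R -> R) u v : u \in I -> v \in I -> u <= v ->
  {within [set z | z \in I], continuous g} ->
  g u <= 0 <= g v \/ g v <= 0 <= g u -> exists2 z, u <= z <= v & g z = 0.
Proof.
move=> uI vI uv g_cont g_sign.
have uvI : `[u, v] `<=` [set z | z \in I].
  by move=> z; rewrite /= in_itv /=; exact: mem_interval_between.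
have sign : Num.min (g u) (g v) <= 0 <= Num.max (g u) (g v).
  by case: g_sign => /andP[h1 h2]; rewrite ge_min le_max h1 h2 ?orbT.
by have [z] := IVT uv (continuous_subspaceW uvI g_cont) sign; rewrite in_itv /=; exists z.
Qed.

Lemma above_line_on_half I f c s b y w :
  {within [set z | z \in I], continuous f} -> spike_bound I f c -> 0 <= c ->
  y - w \in I -> y + w \in I -> 0 <= w ->
  2 * w * (c * (1 + `|s|) + `|s|) < f y - (b + s * y) ->
  (forall z, y - w <= z <= y -> b + s * z < f z) \/
  (forall z, y <= z <= y + w -> b + s * z < f z).
Proof.
move=> f_cont spike c_ge0 lI rI w_ge0 fy_far.
pose g z := f z - (b + s * z).
have g_cont : {within [set z | z \in I], continuous g}.
  apply: within_continuousB => //; apply: continuous_subspaceT => z.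
  by apply: cvgD; [exact: cvg_cst | apply: cvgMr; exact: cvg_id].
have K_ge0 : 0 <= c * (1 + `|s|) + `|s| by rewrite addr_ge0 ?mulr_ge0 ?addr_ge0.
have gy : 0 < g y by rewrite /g; nra.
have inI z : y - w <= z <= y + w -> z \in I by exact: mem_interval_between.
have yI : y \in I by apply: inI; apply/andP; split; lra.
apply: contrapT; rewrite not_orP => -[left_bad right_bad].
move: left_bad => /existsNP[z1'] /not_implyP[/andP[lz1' z1'y] /negP].
rewrite -leNgt => fz1'.
move: right_bad => /existsNP[z2'] /not_implyP[/andP[yz2' z2'r] /negP].
rewrite -leNgt => fz2'.
have [z1 /andP[z1'z1 z1y] gz1] : exists2 z, z1' <= z <= y & g z = 0.
  apply: ivt_zero g_cont _ => //; first by apply: inI; apply/andP; split; lra.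
  by left; rewrite /g subr_le0 fz1' ltW.
have [z2 /andP[yz2 z2z2'] gz2] : exists2 z, y <= z <= z2' & g z = 0.
  apply: ivt_zero g_cont _ => //; first by apply: inI; apply/andP; split; lra.
  by right; rewrite /g subr_le0 fz2' ltW.
have z1_lt_y : z1 < y.
  by rewrite lt_neqAle z1y andbT; apply: contraTneq gy => <-; rewrite gz1 ltxx.
have y_lt_z2 : y < z2.
  by rewrite lt_neqAle yz2 andbT; apply: contraTneq gy => ->; rewrite gz2 ltxx.
have on_line z : g z = 0 -> f z = b + s * z by move/eqP; rewrite subr_eq0 => /eqP.
have z1I : z1 \in I by apply: inI; apply/andP; split; lra.
have z2I : z2 \in I by apply: inI; apply/andP; split; lra.
have yz : z1 < y < z2 by rewrite z1_lt_y.
have := spike_affine_deviation spike z1I z2I yz (on_line _ gz1) (on_line _ gz2).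
have : (c * (1 + `|s|) + `|s|) * (z2 - z1) <= (c * (1 + `|s|) + `|s|) * (2 * w).
  by rewrite ler_wpM2l //; lra.
have := ler_norm (f y - (b + s * y)); lra.
Qed.

(* No measurability is needed: [lebesgue_measure] is an outer measure on all sets. *)
Lemma lebesgue_measure_le {A B : set R} :
  A `<=` B -> (lebesgue_measure A <= lebesgue_measure B)%E.
Proof.
by move=> AB; rewrite /lebesgue_measure /lebesgue_stieltjes_measure /measure_extension;
  exact: le_outer_measure.
Qed.

Lemma lebesgue_measure_hole (A : set R) (a b u w : R) :
  a <= u -> u + w <= b -> A `<=` `]a, b[ -> (forall z, A z -> z < u \/ u + w < z) ->
  (lebesgue_measure A <= (b - a - w)%:E)%E.
Proof.
move=> au ub A_ab A_hole.
have A_sub : A `<=` `]a, u[ `|` `]u + w, b[.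
  move=> z Az; have := A_ab z Az; rewrite /= !in_itv /= => /andP[az zb].
  by case: (A_hole z Az) => h; [left | right]; rewrite ?az ?zb h.
apply: le_trans (lebesgue_measure_le A_sub) _.
have : (lebesgue_measure (`]a, u[ `|` `](u + w)%R, b[) <=
    lebesgue_measure `]a, u[ + lebesgue_measure `](u + w)%R, b[)%E.
  by apply: measureU2; exact: measurable_itv.
move/le_trans; apply.
rewrite !lebesgue_measure_itv /= !lte_fin -!EFinD.
by case: ifP => h1; case: ifP => h2; rewrite ?add0e ?adde0 ?lee_fin; lra.
Qed.

Lemma lebesgue_measure_setI_itv (A : set R) (a b : R) :
  a <= b -> `]a, b[ `<=` A -> lebesgue_measure (A `&` `]a, b[) = (b - a)%:E.
Proof.
move=> ab sub; rewrite setIidr // lebesgue_measure_itv /= lte_fin.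
by case: ifP => // ba; congr (_%:E); apply/eqP; rewrite eq_sym subr_eq0 eq_le ab leNgt ba.
Qed.

Lemma right_density_one_of_itv (A : set R) (x d : R) :
  0 < d -> `]x, x + d[ `<=` A -> right_density_one A x.
Proof.
move=> d_gt0 sub; apply: cvg_near_cst; near=> e.
have e_gt0 : 0 < e by near: e; exact: nbhs_right_gt.
have ed : e < d by near: e; exact: nbhs_right_lt.
rewrite lebesgue_measure_setI_itv; last 2 first.
- lra.
- by apply: subset_trans sub => z; rewrite /= !in_itv /= => /andP[? ?]; apply/andP; split; lra.
by rewrite addrAC subrr add0r -EFinM divff // gt_eqF.
Unshelve. all: by end_near.
Qed.

Lemma left_density_one_of_itv (A : set R) (x d : R) :
  0 < d -> `]x - d, x[ `<=` A -> left_density_one A x.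
Proof.
move=> d_gt0 sub; apply: cvg_near_cst; near=> e.
have e_gt0 : 0 < e by near: e; exact: nbhs_right_gt.
have ed : e < d by near: e; exact: nbhs_right_lt.
rewrite lebesgue_measure_setI_itv; last 2 first.
- lra.
- by apply: subset_trans sub => z; rewrite /= !in_itv /= => /andP[? ?]; apply/andP; split; lra.
by rewrite opprB addrC subrK -EFinM divff // gt_eqF.
Unshelve. all: by end_near.
Qed.

(* Chosen so that 2 k K <= e / 2 for K = c (1 + |s|) + |s|, the constant of
   [spike_affine_deviation]; then [above_line_on_half] applies with w = k h. *)
Definition gap_ratio (c s e : R) : R :=
  Num.min 1 (e / (4 * (c * (1 + `|s|) + `|s|))).

Lemma gap_ratio_gt0 c s e : 0 < c -> 0 < e -> 0 < gap_ratio c s e.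
Proof.
move=> c_gt0 e_gt0; rewrite lt_min ltr01 divr_gt0 // mulr_gt0 //.
by rewrite ltr_wpDr // mulr_gt0 // ltr_wpDr.
Qed.

Lemma window_measure_le I f c s e b (S : set R) y h :
  {within [set z | z \in I], continuous f} -> spike_bound I f c -> 0 < c ->
  y - h \in I -> y + h \in I -> 0 < h -> 0 < e ->
  (forall z, S z -> y - h < z < y + h -> f z <= b + s * z) ->
  e * h < f y - (b + s * y) ->
  (lebesgue_measure (S `&` `](y - h)%R, (y + h)%R[) <=
    ((1 - gap_ratio c s e / 2) * (2 * h))%:E)%E.
Proof.
move=> f_cont spike c_gt0 lI rI h_gt0 e_gt0 S_below y_far.
have k_gt0 := gap_ratio_gt0 s c_gt0 e_gt0.
set k := gap_ratio c s e in k_gt0 *; set K := c * (1 + `|s|) + `|s|.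
have K_gt0 : 0 < K by rewrite ltr_wpDr // mulr_gt0 // ltr_wpDr.
have k_le1 : k <= 1 by rewrite /k ge_min lexx.
have kK : h * (k * (4 * K)) <= h * e.
  rewrite ler_pM2l // -ler_pdivlMr ?mulr_gt0 //.
  by rewrite /k ge_min lexx orbT.
have kh_le_h : k * h <= h by nra.
have kh_ge0 : 0 <= k * h by rewrite mulr_ge0 // ltW.
have inI z : y - h <= z <= y + h -> z \in I by exact: mem_interval_between.
have lwI : y - k * h \in I by apply: inI; apply/andP; split; lra.
have rwI : y + k * h \in I by apply: inI; apply/andP; split; lra.
have y_far' : 2 * (k * h) * K < f y - (b + s * y).
  have : 0 < e * h by rewrite mulr_gt0.
  lra.
rewrite (_ : (1 - k / 2) * (2 * h) = y + h - (y - h) - k * h); last by field.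
have hole u : y - h <= u -> u + k * h <= y + h ->
    (forall z, u <= z <= u + k * h -> b + s * z < f z) ->
    (lebesgue_measure (S `&` `](y - h)%R, (y + h)%R[) <= (y + h - (y - h) - k * h)%:E)%E.
  move=> lu ur above; apply: lebesgue_measure_hole lu ur _ _; first by move=> z [].
  move=> z [Sz zin]; have := S_below z Sz zin.
  have [zu|uz] := ltP z u; first by left.
  have [uz'|zu'] := ltP (u + k * h) z; first by right.
  by have := above z; rewrite uz zu' => /(_ isT); lra.
have [above|above] := above_line_on_half f_cont spike (ltW c_gt0)
  lwI rwI kh_ge0 y_far'.
- apply: (hole (y - k * h)); [lra | lra | move=> z /andP[? ?]].
  by apply: above; apply/andP; split; lra.
- by apply: (hole y); [lra | lra | ].
Qed.

Lemma lee_divEFin (m : \bar R) (r d : R) :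
  0 < d -> (m <= (r * d)%:E)%E -> (m * (d^-1)%:E <= r%:E)%E.
Proof.
move=> d_gt0 /(lee_wpmul2r (_ : (0 <= (d^-1)%:E)%E)).
by rewrite -EFinM mulfK ?gt_eqF //; apply; rewrite lee_fin invr_ge0 ltW.
Qed.

Lemma near_right0_exists (P : R -> Prop) :
  (\forall d \near 0^'+, P d) -> exists2 e, 0 < e & forall d, 0 < d -> d < e -> P d.
Proof.
rewrite near_withinE => /nbhs_ballP [e e_gt0 Pe]; exists e => // d d_gt0 de.
by apply: Pe => //; rewrite /ball /= sub0r normrN ger0_norm ?ltW.
Qed.

Lemma density_ratio_gt (A : set R) (r : R) (window : R -> set R) :
  (fun d => (lebesgue_measure (A `&` window d) * (d^-1)%:E)%E) @ 0^'+ --> 1%E -> r < 1 ->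
  exists2 e, 0 < e & forall d, 0 < d -> d < e ->
    (r%:E < lebesgue_measure (A `&` window d) * (d^-1)%:E)%E.
Proof.
move=> dens r1; apply: near_right0_exists.
have : nbhs 1%E [set z : \bar R | (r%:E < z)%E] by apply: open_ereal_gt'; rewrite lte_fin.
exact: dens.
Qed.

Lemma dquot_le_of_right_density I f c x x' s t :
  {within [set z | z \in I], continuous f} -> spike_bound I f c -> 0 < c ->
  x \in I -> x' \in I -> x < x' -> s < t ->
  right_density_one [set y | y \in I /\ dquot f x y <= s] x ->
  exists2 d, 0 < d & forall y, y \in I -> x < y < x + d -> dquot f x y <= t.
Proof.
move=> f_cont spike c_gt0 xI x'I xx' st dens.
set S := [set y | _] in dens; have ts_gt0 : 0 < t - s by rewrite subr_gt0.
have k_gt0 := gap_ratio_gt0 s c_gt0 ts_gt0; set k := gap_ratio _ _ _ in k_gt0.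
have [e e_gt0 ratio_gt] : exists2 e, 0 < e & forall d, 0 < d -> d < e ->
    ((1 - k / 2)%:E < lebesgue_measure (S `&` `]x, (x + d)%R[) * (d^-1)%:E)%E.
  by apply: density_ratio_gt dens _; lra.
apply: contrapT => no_d; pose d := Num.min (e / 2) ((x' - x) / 2).
have [de dx'] : d <= e / 2 /\ d <= (x' - x) / 2 by rewrite !ge_min !lexx orbT.
have [y yI [/andP[xy yd] ty]] : exists2 y, y \in I & x < y < x + d /\ t < dquot f x y.
  apply: contrapT => none; apply: no_d; exists d; first by rewrite lt_min; apply/andP; split; lra.
  by move=> y yI yd; rewrite leNgt; apply/negP => ty; apply: none; exists y.
have h_gt0 : 0 < y - x by rewrite subr_gt0.
have far : (t - s) * (y - x) < f y - (f x - s * x + s * y).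
  by move: ty; rewrite /dquot ltr_pdivlMr //; lra.
have S_below z : S z -> y - (y - x) < z < y + (y - x) -> f z <= f x - s * x + s * z.
  by move=> [_ zs] /andP[xz _]; move: zs; rewrite /dquot ler_pdivrMr; lra.
have lI : y - (y - x) \in I by rewrite opprB addrCA subrr addr0.
have rI : y + (y - x) \in I by apply: mem_interval_between xI x'I _; apply/andP; split; lra.
have := window_measure_le f_cont spike c_gt0 lI rI h_gt0 ts_gt0 S_below far.
rewrite opprB addrCA subrr addr0 (_ : y + (y - x) = x + 2 * (y - x)); last by ring.
have h2_gt0 : 0 < 2 * (y - x) by lra.
move/(lee_divEFin h2_gt0); apply/negP; rewrite -ltNge.
by apply: ratio_gt; lra.
Qed.

Lemma dquot_le_of_left_density I f c x x' s t :
  {within [set z | z \in I], continuous f} -> spike_bound I f c -> 0 < c ->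
  x \in I -> x' \in I -> x' < x -> s < t ->
  left_density_one [set y | y \in I /\ dquot f x y <= s] x ->
  exists2 d, 0 < d & forall y, y \in I -> x - d < y < x -> dquot f x y <= t.
Proof.
move=> f_cont spike c_gt0 xI x'I x'x st dens.
set S := [set y | _] in dens; have ts_gt0 : 0 < t - s by rewrite subr_gt0.
have k_gt0 := gap_ratio_gt0 (- s) c_gt0 ts_gt0; set k := gap_ratio _ _ _ in k_gt0.
have [e e_gt0 ratio_gt] : exists2 e, 0 < e & forall d, 0 < d -> d < e ->
    ((1 - k / 2)%:E < lebesgue_measure (S `&` `](x - d)%R, x[) * (d^-1)%:E)%E.
  by apply: density_ratio_gt dens _; lra.
apply: contrapT => no_d; pose d := Num.min (e / 2) ((x - x') / 2).
have [de dx'] : d <= e / 2 /\ d <= (x - x') / 2 by rewrite !ge_min !lexx orbT.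
have [y yI [/andP[yd yx] ty]] : exists2 y, y \in I & x - d < y < x /\ t < dquot f x y.
  apply: contrapT => none; apply: no_d; exists d; first by rewrite lt_min; apply/andP; split; lra.
  by move=> y yI yd; rewrite leNgt; apply/negP => ty; apply: none; exists y.
have h_gt0 : 0 < x - y by rewrite subr_gt0.
have far : (t - s) * (x - y) < - f y - (- f x + s * x + - s * y).
  by move: ty; rewrite /dquot ltr_ndivlMr ?subr_lt0 //; lra.
have S_below z : S z -> y - (x - y) < z < y + (x - y) -> - f z <= - f x + s * x + - s * z.
  by move=> [_ zs] /andP[_ zx]; move: zs; rewrite /dquot ler_ndivrMr ?subr_lt0; lra.
have lI : y - (x - y) \in I by apply: mem_interval_between x'I xI _; apply/andP; split; lra.
have rI : y + (x - y) \in I by rewrite addrCA subrr addr0.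
have := window_measure_le (within_continuousN f_cont) (spike_boundN spike) c_gt0
  lI rI h_gt0 ts_gt0 S_below far.
rewrite addrCA subrr addr0 (_ : y - (x - y) = x - 2 * (x - y)); last by ring.
have h2_gt0 : 0 < 2 * (x - y) by lra.
move/(lee_divEFin h2_gt0); apply/negP; rewrite -ltNge.
by apply: ratio_gt; lra.
Qed.

Lemma lee_gtEFin (a b : \bar R) : (forall r : R, (b < r%:E)%E -> (a <= r%:E)%E) -> (a <= b)%E.
Proof.
case: a b => [a| |] [b| |] //= le_ab; rewrite ?leey ?leNye //.
- by rewrite lee_fin; apply/ler_addgt0Pr => e e_gt0; rewrite -lee_fin le_ab // lte_fin ltrDl.
- by have := le_ab (a - 1)%R; rewrite ltNyr lee_fin => /(_ isT) ?; exfalso; lra.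
- by have := le_ab (b + 1)%R; rewrite lte_fin ltrDl ltr01 leNgt ltry => /(_ isT).
- by have := le_ab 0; rewrite ltNyr leNgt ltry => /(_ isT).
Qed.

Lemma ereal_inf_EFin_eq (P Q : set R) :
  Q `<=` P -> (forall s t, P s -> s < t -> Q t) ->
  ereal_inf [set t%:E | t in P] = ereal_inf [set t%:E | t in Q].
Proof.
move=> QP PQ; apply/eqP; rewrite eq_le; apply/andP; split.
  by apply: ereal_inf_le_tmp => _ [t Qt <-]; exists t => //; exact: QP.
apply: le_ereal_inf_tmp => _ [s Ps <-]; apply: lee_gtEFin => t; rewrite lte_fin => st.
by apply: ereal_inf_lbound; exists t => //; exact: PQ st.
Qed.

Lemma ereal_inf_sup_EFin (T : Type) (W : R -> set T) (q : T -> R) :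
  ereal_inf [set ereal_sup [set (q y)%:E | y in W d] | d in [set d : R | 0 < d]] =
  ereal_inf [set t%:E | t in [set t | exists2 d, 0 < d & forall y, W d y -> q y <= t]].
Proof.
apply/eqP; rewrite eq_le; apply/andP; split.
  apply: le_ereal_inf_tmp => _ [t [d d_gt0 le_t] <-].
  apply: ge_ereal_inf; exists (ereal_sup [set (q y)%:E | y in W d]); first by exists d.
  by apply: ge_ereal_sup => _ [y Wy <-]; rewrite lee_fin le_t.
apply: le_ereal_inf_tmp => _ [d d_gt0 <-]; apply: lee_gtEFin => t sup_lt.
apply: ereal_inf_lbound; exists t => //; exists d => // y Wy.
by rewrite -lee_fin; apply: le_trans (ltW sup_lt); apply: ereal_sup_ubound; exists y.
Qed.

Lemma ereal_inf_supN (T : Type) (W : R -> set T) (q : T -> R) :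
  ereal_inf [set ereal_sup [set (- q y)%:E | y in W d] | d in [set d : R | 0 < d]] =
  -%E (ereal_sup [set ereal_inf [set (q y)%:E | y in W d] | d in [set d : R | 0 < d]]).
Proof.
rewrite -ereal_infN image_comp; congr ereal_inf; apply: eq_imagel => d _ /=.
by rewrite -ereal_supN image_comp.
Qed.

Lemma ereal_inf_EFinN (P : set R) :
  ereal_inf [set t%:E | t in [set t | P (- t)]] = -%E (ereal_sup [set t%:E | t in P]).
Proof.
rewrite -ereal_infN image_comp; congr ereal_inf; apply/seteqP; split => _ [t Pt <-].
  by exists (- t) => //=; rewrite opprK.
by exists (- t) => /=; rewrite ?opprK // EFinN.
Qed.


Lemma dquotN f x y : dquot (fun z => - f z) x y = - dquot f x y.
Proof. by rewrite /dquot -opprD mulNr. Qed.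

Lemma dini_upper_rightN I f x :
  dini_upper_right I (fun z => - f z) x = -%E (dini_lower_right I f x).
Proof.
rewrite /dini_upper_right -ereal_inf_supN.
by congr ereal_inf; apply: eq_imagel => d _; under eq_imagel do rewrite dquotN.
Qed.

Lemma dini_upper_leftN I f x :
  dini_upper_left I (fun z => - f z) x = -%E (dini_lower_left I f x).
Proof.
rewrite /dini_upper_left -ereal_inf_supN.
by congr ereal_inf; apply: eq_imagel => d _; under eq_imagel do rewrite dquotN.
Qed.

Lemma dquotN_le_set I f x t :
  [set y | y \in I /\ dquot (fun z => - f z) x y <= t] = [set y | y \in I /\ - t <= dquot f x y].
Proof. by apply/seteqP; split => y [yI le_t]; split => //; move: le_t; rewrite dquotN lerNl. Qed.

Lemma ap_upper_rightN I f x :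
  ap_upper_right I (fun z => - f z) x = -%E (ap_lower_right I f x).
Proof.
rewrite /ap_upper_right -ereal_inf_EFinN; congr ereal_inf; congr image.
by apply/funext => t /=; rewrite dquotN_le_set.
Qed.

Lemma ap_upper_leftN I f x :
  ap_upper_left I (fun z => - f z) x = -%E (ap_lower_left I f x).
Proof.
rewrite /ap_upper_left -ereal_inf_EFinN; congr ereal_inf; congr image.
by apply/funext => t /=; rewrite dquotN_le_set.
Qed.

Lemma ap_upper_right_eq I f c x x' :
  {within [set z | z \in I], continuous f} -> spike_bound I f c -> 0 < c ->
  x \in I -> x' \in I -> x < x' -> ap_upper_right I f x = dini_upper_right I f x.
Proof.
move=> f_cont spike c_gt0 xI x'I xx'.
rewrite /ap_upper_right /dini_upper_right ereal_inf_sup_EFin.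
apply: ereal_inf_EFin_eq => [t [d d_gt0 le_t] | s t dens st].
- apply: (@right_density_one_of_itv _ x (Num.min d (x' - x))).
    by rewrite lt_min d_gt0 subr_gt0.
  have [md mx] : Num.min d (x' - x) <= d /\ Num.min d (x' - x) <= x' - x.
    by rewrite !ge_min !lexx orbT.
  move=> y; rewrite /= in_itv /= => /andP[xy ym].
  have yI : y \in I by apply: mem_interval_between xI x'I _; apply/andP; split; lra.
  by split => //; apply: le_t; split => //; apply/andP; split; lra.
- have [d d_gt0 le_t] := dquot_le_of_right_density f_cont spike c_gt0 xI x'I xx' st dens.
  by exists d => // y [yI yd]; exact: le_t.
Qed.

Lemma ap_upper_left_eq I f c x x' :
  {within [set z | z \in I], continuous f} -> spike_bound I f c -> 0 < c ->
  x \in I -> x' \in I -> x' < x -> ap_upper_left I f x = dini_upper_left I f x.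
Proof.
move=> f_cont spike c_gt0 xI x'I x'x.
rewrite /ap_upper_left /dini_upper_left ereal_inf_sup_EFin.
apply: ereal_inf_EFin_eq => [t [d d_gt0 le_t] | s t dens st].
- apply: (@left_density_one_of_itv _ x (Num.min d (x - x'))).
    by rewrite lt_min d_gt0 subr_gt0.
  have [md mx] : Num.min d (x - x') <= d /\ Num.min d (x - x') <= x - x'.
    by rewrite !ge_min !lexx orbT.
  move=> y; rewrite /= in_itv /= => /andP[my yx].
  have yI : y \in I by apply: mem_interval_between x'I xI _; apply/andP; split; lra.
  by split => //; apply: le_t; split => //; apply/andP; split; lra.
- have [d d_gt0 le_t] := dquot_le_of_left_density f_cont spike c_gt0 xI x'I x'x st dens.
  by exists d => // y [yI yd]; exact: le_t.
Qed.

End ApproximateDini.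

Theorem proposition4p1 (R : realType) (I : interval R) (f : R -> R) :
  nondegenerate_p41 I ->
  {within [set y | y \in I], continuous f} ->
  monotone_metric (graph_p41 I f) ->
  forall x : R, x \in I ->
    ((exists y, y \in I /\ x < y) ->
       ap_upper_right I f x = dini_upper_right I f x /\
       ap_lower_right I f x = dini_lower_right I f x) /\
    ((exists y, y \in I /\ y < x) ->
       ap_upper_left I f x = dini_upper_left I f x /\
       ap_lower_left I f x = dini_lower_left I f x).
Proof.
(* Non-degeneracy of I is subsumed by the one-sided hypotheses. *)
move=> _ f_cont graph_mono x xI.
have [c c_gt0 spike] := spike_bound_of_monotone_graph f_cont graph_mono.
have f_contN := within_continuousN f_cont; have spikeN := spike_boundN spike.
split=> [[x' [x'I xx']] | [x' [x'I x'x]]]; split.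
- exact: ap_upper_right_eq f_cont spike c_gt0 xI x'I xx'.
- apply: oppe_inj; rewrite -ap_upper_rightN -dini_upper_rightN.
  exact: ap_upper_right_eq f_contN spikeN c_gt0 xI x'I xx'.
- exact: ap_upper_left_eq f_cont spike c_gt0 xI x'I x'x.
- apply: oppe_inj; rewrite -ap_upper_leftN -dini_upper_leftN.
  exact: ap_upper_left_eq f_contN spikeN c_gt0 xI x'I x'x.
Qed.
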